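(* $\mathscr{P}$ is a strict monoidal category with daggers.
   Context: For $i\in\mathbb{N}$ let $V_i\cong\mathbb{C}^2$ with orthonormal basis $v_{i,0},v_{i,1}$, and for a finite ordered $N\subset\mathbb{N}$ let $V_N=\bigotimes_{i\in N}V_i$. For $I\subseteq N$ let $|I\rangle=\bigotimes_{i\in N}v_{i,\chi(i,I)}$ and $\langle I|=\bigotimes_{i\in N}v^*_{i,\chi(i,I)}$, where $\chi(i,I)=1$ if $i\in I$ and $0$ otherwise. For a skew-symmetric complex matrix $M$ whose rows and columns are labeled by the same ordered set $N$, let $M_I$ be the principal submatrix on labels $I$ and $M_{\bar I}$ the principal submatrix with labels $I$ removed, and define $\operatorname{sPf}(M)=\sum_{I\subseteq N}\operatorname{Pf}(M_I)|I\rangle$ and $\operatorname{sPf}^\vee(M)=\sum_{I\subseteq N}\operatorname{Pf}(M_{\bar I})\langle I|$ (Pfaffian of the empty matrix is $1$, of odd-size matrices $0$). $\mathscr{P}$ is the monoidal subcategory of $\mathrm{Vect}_\mathbb{C}$ whose objects are the spaces $V_N$ for ordered subsets $N\subset\mathbb{N}$, with the usual tensor product, and whose morphisms are generated, under composition (tensor contraction) and tensor product, by all $\operatorname{sPf}(M)$ and $\operatorname{sPf}^\vee(M)$. The dagger is the usual adjoint of linear maps. *)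

From HB Require Import structures.
From mathcomp Require Import all_boot all_order all_algebra.
From mathcomp Require Import reals complex.
Set Implicit Arguments. Unset Strict Implicit. Unset Printing Implicit Defensive.
Import Order.TTheory GRing.Theory Num.Theory.
Local Open Scope ring_scope.

Section Pcat.
Variable R : realType.
Local Notation C := (R[i]).

Definition skew_on (M : nat -> nat -> C) (N : seq nat) : Prop :=
  forall i j, i \in N -> j \in N -> M i j = - M j i.

Definition drop_at (k : nat) (s : seq nat) : seq nat := take k s ++ drop k.+1 s.

Fixpoint pf_aux (M : nat -> nat -> C) (n : nat) (L : seq nat) : C :=
  match n, L with
  | _, [::] => 1
  | 0, _ :: _ => 0
  | n'.+1, [:: _] => 0
  | n'.+1, x :: r =>
      \sum_(k < size r) (-1) ^+ k * M x (nth 0%N r k) * pf_aux M n' (drop_at k r)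
  end.
Definition Pf (M : nat -> nat -> C) (L : seq nat) : C := pf_aux M (size L) L.

(* A linear map V_N -> V_K (N = mdom, K = mcod, ordered label lists) is given
   by its matrix in the bases |I>: a basis vector |I> of V_N, I ⊆ N, is encoded
   by the bitseq b of length size N with I = mask b N (b_i = chi(N_i, I)).
   mcoef f b c = <b| f |c>  (output bits b, input bits c).  All morphisms built
   below vanish when b or c has the wrong length. *)
Record mor := Mor { mdom : seq nat; mcod : seq nat;
                    mcoef : seq bool -> seq bool -> C }.

Fixpoint allbits (n : nat) : seq (seq bool) :=
  if n is n'.+1 then [seq b :: s | b <- [:: false; true], s <- allbits n']
  else [:: [::]].

Definition idm (N : seq nat) : mor :=
  Mor N N (fun b c => if (b == c) && (size b == size N) then 1 else 0).

(* composition g o f (requires mcod f = mdom g): contraction *)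
Definition comp (g f : mor) : mor :=
  Mor (mdom f) (mcod g)
      (fun b c => \sum_(m <- allbits (size (mcod f))) mcoef g b m * mcoef f m c).

Definition tens (f g : mor) : mor :=
  Mor (mdom f ++ mdom g) (mcod f ++ mcod g)
      (fun b c => mcoef f (take (size (mcod f)) b) (take (size (mdom f)) c)
                * mcoef g (drop (size (mcod f)) b) (drop (size (mdom f)) c)).

(* the usual adjoint (w.r.t. the orthonormal bases v_{i,0}, v_{i,1}) *)
Definition dagger (f : mor) : mor :=
  Mor (mcod f) (mdom f) (fun b c => (mcoef f c b)^*).

Definition sPf (M : nat -> nat -> C) (N : seq nat) : mor :=
  Mor [::] N (fun b c => if (size b == size N) && (c == [::])
                         then Pf M (mask b N) else 0).

Definition sPfv (M : nat -> nat -> C) (N : seq nat) : mor :=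
  Mor N [::] (fun b c => if (b == [::]) && (size c == size N)
                         then Pf M (mask (map negb c) N) else 0).

Inductive inP : mor -> Prop :=
| inP_sPf M N : uniq N -> skew_on M N -> inP (sPf M N)
| inP_sPfv M N : uniq N -> skew_on M N -> inP (sPfv M N)
| inP_id N : inP (idm N)
| inP_comp g f : inP f -> inP g -> mcod f = mdom g -> inP (comp g f)
| inP_tens f g : inP f -> inP g -> inP (tens f g).

Definition strict_monoidal_dagger_cat (Q : mor -> Prop) : Prop :=
  (forall N, Q (idm N)) /\
  (forall f g, Q f -> Q g -> mcod f = mdom g -> Q (comp g f)) /\
  (forall f, Q f -> comp (idm (mcod f)) f = f /\ comp f (idm (mdom f)) = f) /\
  (forall f g h, Q f -> Q g -> Q h -> mcod f = mdom g -> mcod g = mdom h ->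
      comp h (comp g f) = comp (comp h g) f) /\
  (forall f g, Q f -> Q g -> Q (tens f g)) /\
  (forall N M, tens (idm N) (idm M) = idm (N ++ M)) /\
  (forall f, Q f -> tens (idm [::]) f = f /\ tens f (idm [::]) = f) /\
  (forall f g h, Q f -> Q g -> Q h -> tens (tens f g) h = tens f (tens g h)) /\
  (forall f f' g g', Q f -> Q f' -> Q g -> Q g' ->
      mcod f = mdom g -> mcod f' = mdom g' ->
      tens (comp g f) (comp g' f') = comp (tens g g') (tens f f')) /\
  (forall f, Q f -> Q (dagger f)) /\
  (forall N, dagger (idm N) = idm N) /\
  (forall f, Q f -> dagger (dagger f) = f) /\
  (forall f g, Q f -> Q g -> mcod f = mdom g ->
      dagger (comp g f) = comp (dagger f) (dagger g)) /\
  (forall f g, Q f -> Q g -> dagger (tens f g) = tens (dagger f) (dagger g)).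

End Pcat.

From Pilot Require Import Defs.
From mathcomp Require Import all_boot all_order all_algebra.
From mathcomp Require Import reals complex.
From Stdlib Require Import FunctionalExtensionality.
From mathcomp Require Import zify ring.
Set Implicit Arguments. Unset Strict Implicit. Unset Printing Implicit Defensive.
Import Order.TTheory GRing.Theory Num.Theory.
Local Open Scope ring_scope.

(* Morphisms of P are matrices indexed by bit strings, so the category, monoidal
   and dagger laws are identities between finite sums; they hold for every
   matrix vanishing outside its format ([wf_mor]), as all morphisms of P do.
   The real content is closure under the adjoint.  For a generator sPf(M) on N,
   take a disjoint copy N + s of the labels and contract the state
   sPf(-conj M) on N + s against the effect sPf^v of the perfect matching
   i <-> i + s on N ++ (N + s).  The Pfaffian of that matching on I ++ (J + s)
   vanishes unless I = J, where it is a sign depending only on |I|, so the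
   contraction is sum_I conj Pf(M_I) <I| up to a global sign; the sign, like
   every scalar, is itself a morphism of P.  sPf^v(M) is handled symmetrically. *)

Lemma allbitsS n :
  allbits n.+1 = map (cons false) (allbits n) ++ map (cons true) (allbits n).
Proof. by rewrite /= cats0. Qed.

Lemma size_allbits n m : m \in allbits n -> size m = n.
Proof.
elim: n m => [|n IH] m; first by rewrite inE => /eqP->.
by rewrite allbitsS mem_cat => /orP[] /mapP [s /IH sn ->] /=; rewrite sn.
Qed.

Section BigAllbits.
Variable V : nmodType.

Lemma big_allbitsS n (F : seq bool -> V) :
  \sum_(m <- allbits n.+1) F m =
  \sum_(m <- allbits n) F (false :: m) + \sum_(m <- allbits n) F (true :: m).
Proof. by rewrite allbitsS big_cat !big_map. Qed.

Lemma big_allbits_delta n c (F : seq bool -> V) :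
  \sum_(m <- allbits n) (if m == c then F m else 0) =
  if size c == n then F c else 0.
Proof.
elim: n c F => [|n IH] c F; first by rewrite big_seq1; case: c.
rewrite big_allbitsS; case: c => [|x c]; first by rewrite !big1 ?addr0.
have cons_delta y : \sum_(m <- allbits n) (if y :: m == x :: c then F (y :: m) else 0) =
    if y == x then \sum_(m <- allbits n) (if m == c then F (y :: m) else 0) else 0.
  by case: eqP => [->|yx]; [apply: eq_bigr => m _; rewrite eqseq_cons eqxx|
    rewrite big1 // => m _; rewrite eqseq_cons; case: eqP].
by rewrite !cons_delta !IH eqSS {cons_delta}; case: x; rewrite /= ?add0r ?addr0.
Qed.

Lemma big_allbits_cat n1 n2 (F : seq bool -> V) :
  \sum_(m <- allbits (n1 + n2)) F m =
  \sum_(m1 <- allbits n1) \sum_(m2 <- allbits n2) F (m1 ++ m2).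
Proof.
elim: n1 F => [|n1 IH] F; first by rewrite big_seq1.
by rewrite addSn !big_allbitsS !IH.
Qed.

End BigAllbits.

Lemma eq_subseq_uniq (T : eqType) (s1 s2 t : seq T) : uniq t ->
  subseq s1 t -> subseq s2 t -> s1 =i s2 -> s1 = s2.
Proof.
move=> Ut s1t s2t E.
rewrite (elimT (subseq_uniqP Ut) s1t) (elimT (subseq_uniqP Ut) s2t).
by apply: eq_filter => x; rewrite /= E.
Qed.

Lemma eq_mask_uniq (T : eqType) (s : seq T) (m1 m2 : seq bool) : uniq s ->
  size m1 = size s -> size m2 = size s -> (mask m1 s == mask m2 s) = (m1 == m2).
Proof.
move=> Us m1s m2s; apply/eqP/eqP => [|-> //].
elim: s m1 m2 Us m1s m2s => [|x s IH] [|b1 m1] [|b2 m2] //= /andP [xs Us] [m1s] [m2s].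
have x_notin m : (x \in mask m s) = false by apply/negbTE; apply: contra xs; apply: mem_mask.
case: b1 b2 => [] [] E.
- by case: E => /(IH _ _ Us m1s m2s) ->.
- by have := mem_head x (mask m1 s); rewrite E x_notin.
- by have := mem_head x (mask m2 s); rewrite -E x_notin.
- by rewrite (IH _ _ Us m1s m2s E).
Qed.

Lemma size_mask_negb (T : Type) (c : seq bool) (L : seq T) : size c = size L ->
  size (mask (map negb c) L) = (size L - size (mask c L))%N.
Proof.
move=> cL; rewrite !size_mask ?size_map // count_map -cL -(count_predC id c).
by rewrite addKn; apply: eq_count.
Qed.

Lemma size_drop_at k (s : seq nat) : (k < size s)%N -> size (drop_at k s) = (size s).-1.
Proof. by move=> ks; rewrite /drop_at size_cat size_take size_drop ks; lia. Qed.

Lemma map_drop_at (g : nat -> nat) k s : drop_at k (map g s) = map g (drop_at k s).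
Proof. by rewrite /drop_at map_cat map_take map_drop. Qed.

Lemma drop_at_cat k (s t : seq nat) : drop_at (size s + k) (s ++ t) = s ++ drop_at k t.
Proof.
rewrite /drop_at take_cat drop_cat ltnNge leq_addr addKn catA.
by rewrite ltnNge -addnS leq_addr /= addKn.
Qed.

Lemma subseq_drop_at k (s : seq nat) : subseq (drop_at k s) s.
Proof.
rewrite /drop_at -[X in subseq _ X](cat_take_drop k s) cat_subseq //.
by rewrite -add1n -drop_drop drop_subseq.
Qed.

Lemma drop_at_ind (P : seq nat -> Prop) :
  P [::] -> (forall x r, (forall k, (k < size r)%N -> P (drop_at k r)) -> P (x :: r)) ->
  forall s, P s.
Proof.
move=> P0 PS s; move: {2}(size s) (leqnn (size s)) => n.
elim: n s => [|n IH] [|x r] //= r_le; apply: PS => k kr.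
by apply: IH; rewrite size_drop_at //; lia.
Qed.

Lemma eq_cons_drop_at_index (t s u : seq nat) x : uniq t ->
  subseq s t -> subseq (x :: u) t -> x \in s ->
  (drop_at (index x s) s == u) = (s == x :: u).
Proof.
move=> Ut st xut xs; apply/eqP/eqP => [E|->]; last by rewrite /= eqxx /drop_at /= drop0.
apply: eq_subseq_uniq Ut st xut _ => y.
have xsi : (index x s < size s)%N by rewrite index_mem.
rewrite -E /drop_at -{1}(cat_take_drop (index x s) s) (drop_nth x xsi) nth_index //.
by rewrite !(mem_cat, inE) orbCA.
Qed.

Section PfaffianCategory.
Variable R : realType.
Local Notation C := R[i].
Implicit Types (M : nat -> nat -> C) (i j x s : nat) (r L N A B : seq nat).

Lemma pf_aux_cons M n x r :
  pf_aux M n.+1 (x :: r) =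
  \sum_(k < size r) (-1) ^+ k * M x (nth 0%N r k) * pf_aux M n (drop_at k r).
Proof. by case: r => [|y r] //=; rewrite big_ord0. Qed.

Lemma pf_aux_fuel M n1 n2 L :
  (size L <= n1)%N -> (size L <= n2)%N -> pf_aux M n1 L = pf_aux M n2 L.
Proof.
elim: n1 n2 L => [|n1 IH] [|n2] [|x r] // le1 le2; rewrite /= in le1 le2.
rewrite !pf_aux_cons; apply: eq_bigr => k _; have kr := ltn_ord k.
by rewrite (IH n2) // size_drop_at //; lia.
Qed.

Lemma Pf_cons M x r :
  Pf M (x :: r) = \sum_(k < size r) (-1) ^+ k * M x (nth 0%N r k) * Pf M (drop_at k r).
Proof.
rewrite /Pf [size (x :: r)]/= pf_aux_cons; apply: eq_bigr => k _; have kr := ltn_ord k.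
by rewrite (@pf_aux_fuel _ _ (size (drop_at k r))) // size_drop_at //; lia.
Qed.

Lemma Pf_odd M L : odd (size L) -> Pf M L = 0.
Proof.
elim/drop_at_ind: L => // x r IH /= odd_r.
rewrite Pf_cons big1 // => k _; have kr := ltn_ord k.
rewrite IH ?mulr0 // size_drop_at //.
have r0 : (0 < size r)%N := leq_ltn_trans (leq0n k) kr.
by move: odd_r r0; case: (size r) => //= n; rewrite negbK.
Qed.

Lemma Pf_scale M c L : Pf (fun i j => c * M i j) L = c ^+ (size L)./2 * Pf M L.
Proof.
elim/drop_at_ind: L => [|x r IH]; first by rewrite mulr1.
rewrite !Pf_cons mulr_sumr; apply: eq_bigr => k _; have kr := ltn_ord k.
rewrite IH // size_drop_at //=.
have -> : uphalf (size r) = ((size r).-1)./2.+1.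
  by have : (0 < size r)%N := leq_ltn_trans (leq0n k) kr; case: (size r).
by rewrite exprS; ring.
Qed.

Lemma Pf_rmorph (f : {rmorphism C -> C}) M L :
  Pf (fun i j => f (M i j)) L = f (Pf M L).
Proof.
elim/drop_at_ind: L => [|x r IH]; first by rewrite rmorph1.
rewrite !Pf_cons rmorph_sum; apply: eq_bigr => k _.
by rewrite IH // ?ltn_ord !rmorphM rmorph_sign.
Qed.

Lemma Pf_relabel M M' (g : nat -> nat) L :
  (forall x y, M' (g x) (g y) = M x y) -> Pf M' (map g L) = Pf M L.
Proof.
move=> gM; elim/drop_at_ind: L => // x r IH.
rewrite !Pf_cons size_map; apply: eq_bigr => k _; have kr := ltn_ord k.
by rewrite map_drop_at IH // (nth_map 0%N) // gM.
Qed.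

Lemma Pf_cons_zero_row M x r : (forall y, y \in r -> M x y = 0) -> Pf M (x :: r) = 0.
Proof.
move=> Mx0; rewrite Pf_cons big1 // => k _.
by rewrite Mx0 ?mem_nth // mulr0 mul0r.
Qed.

Lemma Pf_cons_single M x r k : (k < size r)%N ->
  (forall j, (j < size r)%N -> j != k -> M x (nth 0%N r j) = 0) ->
  Pf M (x :: r) = (-1) ^+ k * M x (nth 0%N r k) * Pf M (drop_at k r).
Proof.
move=> kr Mx0; rewrite Pf_cons (bigD1 (Ordinal kr)) //= big1 ?addr0 // => j jk.
by rewrite Mx0 ?mulr0 ?mul0r.
Qed.

(** * The Pfaffian of a perfect matching *)

Definition pairing s i j : C :=
  if j == i + s then 1 else if i == j + s then -1 else 0.

Fixpoint matching_sign n : C :=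
  if n is n'.+1 then (-1) ^+ n' * matching_sign n' else 1.

Lemma pairing_skew s N : (0 < s)%N -> skew_on (pairing s) N.
Proof.
move=> s0 i j _ _; rewrite /pairing.
have [ji|_] := eqVneq j (i + s); last by case: eqP; rewrite ?opprK ?oppr0.
by rewrite ifF ?opprK //; apply/eqP; lia.
Qed.

Lemma pairing_low s i j : (i < s)%N -> pairing s i j = if j == i + s then 1 else 0.
Proof. by move=> lt_is; rewrite /pairing; case: eqP => // _; rewrite ifF //; apply/eqP; lia. Qed.

Lemma pairing_high s i j : (s <= i < s + s)%N -> (s <= j < s + s)%N -> pairing s i j = 0.
Proof. by move=> i_s j_s; rewrite /pairing !ifF //; apply/eqP; lia. Qed.

Lemma Pf_pairing s N A B : uniq N -> all (fun x => x < s)%N N ->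
  subseq A N -> subseq B (map (addn^~ s) N) ->
  Pf (pairing s) (A ++ B) = if B == map (addn^~ s) A then matching_sign (size A) else 0.
Proof.
move=> UN /allP ltNs; have UNs : uniq (map (addn^~ s) N) by rewrite map_inj_uniq //; apply: addIn.
have highB B' : subseq B' (map (addn^~ s) N) -> forall y, y \in B' -> (s <= y < s + s)%N.
  by move=> /mem_subseq sB y /sB /mapP [x /ltNs x_s ->]; lia.
elim: A B => [|a A IH] B AN BNs.
  case: B BNs => [//|y B] BNs; rewrite Pf_cons_zero_row // => z zB.
  by rewrite pairing_high ?(highB _ BNs) ?mem_head // inE zB orbT.
have lowA y : y \in a :: A -> (y < s)%N by move=> /(mem_subseq AN) /ltNs.
have lowA' y : y \in A -> (y < s)%N by move=> yA; apply: lowA; rewrite inE yA orbT.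
have AN' : subseq A N := subseq_trans (subseq_cons A a) AN.
have U_AB : uniq (A ++ B).
  rewrite cat_uniq (subseq_uniq AN' UN) (subseq_uniq BNs UNs) andbT /=.
  by apply/hasPn => y /(highB _ BNs) yB; apply/negP => /lowA'; lia.
have [asB|asB] := boolP (a + s \in B); last first.
  rewrite Pf_cons_zero_row; last first.
    move=> y; rewrite pairing_low ?lowA ?mem_head // mem_cat.
    by case: eqP => [->|//]; rewrite (negbTE asB) orbF => /lowA'; lia.
  by rewrite ifF //; apply: contraNF asB => /eqP ->; rewrite mem_head.
set i0 := index (a + s) B.
have i0B : (i0 < size B)%N by rewrite index_mem.
have nth_i0 : nth 0%N (A ++ B) (size A + i0) = a + s.
  by rewrite nth_cat ifN ?addKn ?nth_index // -leqNgt leq_addr.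
rewrite cat_cons (@Pf_cons_single _ _ _ (size A + i0)) ?size_cat ?ltn_add2l //; last first.
  move=> j jAB; apply: contraNeq; rewrite pairing_low ?lowA ?mem_head //.
  by rewrite -nth_i0 nth_uniq ?size_cat ?ltn_add2l //; case: (j == _); rewrite ?eqxx.
rewrite nth_i0 pairing_low ?lowA ?mem_head // eqxx mulr1 drop_at_cat.
rewrite IH //; last exact: subseq_trans (subseq_drop_at i0 B) BNs.
rewrite (@eq_cons_drop_at_index (map (addn^~ s) N)) //; last exact: map_subseq AN.
case: eqP => [Ba|_]; last by rewrite mulr0.
by rewrite /i0 Ba /= eqxx addn0.
Qed.

Lemma Pf_pairing_mask s N (c m : seq bool) : uniq N -> all (fun x => x < s)%N N ->
  size c = size N -> size m = size N ->
  Pf (pairing s) (mask c N ++ mask m (map (addn^~ s) N)) =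
  if m == c then matching_sign (size (mask c N)) else 0.
Proof.
move=> UN ltNs cN mN; rewrite (@Pf_pairing _ N) ?mask_subseq // -map_mask.
by rewrite (inj_eq (inj_map (@addIn s))) eq_mask_uniq.
Qed.

Lemma matching_signSS n : matching_sign n.+2 = - matching_sign n.
Proof. by rewrite /= mulrA exprS mulN1r mulNr -expr2 sqrr_sign mulN1r. Qed.

Lemma matching_sign_sqr n : matching_sign n ^+ 2 = 1.
Proof. by elim: n => [|n IH]; rewrite ?expr1n //= exprMn sqrr_sign IH mul1r. Qed.

Lemma matching_signD_double m k : matching_sign (m + k.*2) = (-1) ^+ k * matching_sign m.
Proof.
elim: k => [|k IH]; first by rewrite addn0 mul1r.
by rewrite doubleS !addnS matching_signSS IH exprS mulN1r mulNr.
Qed.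

Lemma matching_sign_subn_Pf M L n : (size L <= n)%N ->
  matching_sign (n - size L) * matching_sign n * (-1) ^+ (size L)./2 * Pf M L = Pf M L.
Proof.
move=> Ln; have [oddL|evenL] := boolP (odd (size L)); first by rewrite Pf_odd ?mulr0.
set k := (size L)./2; have Lk : size L = k.*2.
  by rewrite -{1}(odd_double_half (size L)) (negbTE evenL).
rewrite -[in matching_sign n](subnK Ln) Lk matching_signD_double mulrCA -expr2.
by rewrite matching_sign_sqr mulr1 -expr2 sqrr_sign mul1r.
Qed.

Definition conj_shift M s i j : C := - (M (i - s)%N (j - s)%N)^*.

Lemma conj_shift_skew M N s : skew_on M N -> skew_on (conj_shift M s) (map (addn^~ s) N).
Proof.
move=> skewM _ _ /mapP [i iN ->] /mapP [j jN ->].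
by rewrite /conj_shift !addnK skewM // rmorphN.
Qed.

Lemma Pf_conj_shift M s L :
  Pf (conj_shift M s) (map (addn^~ s) L) = (-1) ^+ (size L)./2 * (Pf M L)^*.
Proof.
rewrite (@Pf_relabel (fun i j => -1 * (M i j)^*)); last by move=> i j; rewrite /conj_shift !addnK mulN1r.
by rewrite Pf_scale (Pf_rmorph Num.conj_op).
Qed.

(** * Morphisms as matrices *)

Local Notation idm := (@idm R).
Local Notation comp := (@Defs.comp R).
Implicit Types (f g h : mor R) (e : C).

Definition wf_mor f := forall b c,
  (size b != size (mcod f)) || (size c != size (mdom f)) -> mcoef f b c = 0.

Lemma mor_ext f g : mdom f = mdom g -> mcod f = mcod g ->
  (forall b c, mcoef f b c = mcoef g b c) -> f = g.
Proof.
case: f g => [N K F] [N' K' G] /= -> -> FG; congr Mor.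
by apply: functional_extensionality => b; apply: functional_extensionality => c.
Qed.

Lemma wf_mor_eq f g : wf_mor f -> wf_mor g -> mdom f = mdom g -> mcod f = mcod g ->
  (forall b c, size b = size (mcod f) -> size c = size (mdom f) ->
     mcoef f b c = mcoef g b c) ->
  f = g.
Proof.
move=> wf_f wf_g dfg cfg fg; apply: mor_ext => // b c.
have [off|] := boolP ((size b != size (mcod f)) || (size c != size (mdom f))).
  by rewrite wf_f // wf_g // -cfg -dfg.
by rewrite negb_or !negbK => /andP [/eqP bf /eqP cf]; apply: fg.
Qed.

Lemma wf_idm N : wf_mor (idm N).
Proof.
move=> b c /= /orP[] /negbTE bc; first by rewrite bc andbF.
by case: eqP => [->|]; rewrite ?bc.
Qed.

Lemma wf_sPf M N : wf_mor (sPf M N).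
Proof.
move=> b c /orP[] /negbTE bc /=; first by rewrite bc.
by case: c bc => [|x c] //= _; rewrite andbF.
Qed.

Lemma wf_sPfv M N : wf_mor (sPfv M N).
Proof.
move=> b c /orP[] /negbTE bc /=; last by rewrite bc andbF.
by case: b bc.
Qed.

Lemma wf_comp f g : wf_mor f -> wf_mor g -> wf_mor (comp g f).
Proof.
move=> wf_f wf_g b c /orP[] off /=.
  by apply: big1 => m _; rewrite wf_g ?mul0r // off.
by apply: big1 => m _; rewrite wf_f ?mulr0 // off orbT.
Qed.

Lemma wf_tens f g : wf_mor f -> wf_mor g -> wf_mor (tens f g).
Proof.
move=> wf_f wf_g b c /=; rewrite !size_cat => off.
have [off_f|on_f] := boolP ((size (take (size (mcod f)) b) != size (mcod f)) ||
                            (size (take (size (mdom f)) c) != size (mdom f))).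
  by rewrite wf_f ?mul0r.
rewrite wf_g ?mulr0 //; move: off on_f; rewrite !size_drop !size_take.
by case: ltnP => ? /=; case: ltnP => ? /=; lia.
Qed.

Lemma wf_dagger f : wf_mor f -> wf_mor (dagger f).
Proof. by move=> wf_f b c off /=; rewrite wf_f ?conjC0 // orbC. Qed.

Lemma inP_wf f : inP f -> wf_mor f.
Proof.
elim=> *; by [apply: wf_sPf | apply: wf_sPfv | apply: wf_idm | apply: wf_comp | apply: wf_tens].
Qed.

Lemma comp_idl f : wf_mor f -> comp (idm (mcod f)) f = f.
Proof.
move=> wf_f; apply: mor_ext => //= b c.
rewrite (eq_bigr (fun m => if m == b then
    (if size b == size (mcod f) then mcoef f m c else 0) else 0)); last first.
  by move=> m _; rewrite (eq_sym b m); case: (m == b); case: (_ == _); rewrite ?mul1r ?mul0r.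
rewrite big_allbits_delta; case: eqP => // bf.
by rewrite wf_f //; apply/orP; left; apply/eqP.
Qed.

Lemma comp_idr f : wf_mor f -> comp f (idm (mdom f)) = f.
Proof.
move=> wf_f; apply: mor_ext => //= b c.
rewrite (eq_bigr (fun m => if m == c then
    (if size c == size (mdom f) then mcoef f b m else 0) else 0)); last first.
  by move=> m _; case: eqP => [->|_]; [case: (_ == _)|]; rewrite /= ?mulr1 ?mulr0.
rewrite big_allbits_delta; case: eqP => // cf.
by rewrite wf_f //; apply/orP; right; apply/eqP.
Qed.

Lemma comp_assoc f g h : comp h (comp g f) = comp (comp h g) f.
Proof.
apply: mor_ext => //= b c.
under eq_bigr do rewrite mulr_sumr.
under [RHS]eq_bigr do rewrite mulr_suml.
by rewrite exchange_big /=; apply: eq_bigr => m _; apply: eq_bigr => m' _; rewrite mulrA.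
Qed.

Lemma tens_idm N K : tens (idm N) (idm K) = idm (N ++ K).
Proof.
apply: mor_ext => //= b c; rewrite size_cat.
have [<-|bc] := eqVneq b c.
  rewrite !eqxx /= size_take size_drop.
  by case: ltnP => ?; do 3 case: eqP => ?; rewrite ?mulr1 ?mulr0 ?mul0r //; lia.
rewrite andFb; case: (eqVneq (take (size N) b) (take (size N) c)) => [tbc|_]; last by rewrite mul0r.
case: (eqVneq (drop (size N) b) (drop (size N) c)) => [dbc|_]; last by rewrite mulr0.
by move: bc; rewrite -(cat_take_drop (size N) b) tbc dbc cat_take_drop eqxx.
Qed.

Lemma tens_unitl f : tens (idm [::]) f = f.
Proof. by apply: mor_ext => //= b c; rewrite !take0 !drop0 /= mul1r. Qed.

Lemma tens_unitr f : wf_mor f -> tens f (idm [::]) = f.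
Proof.
move=> wf_f; apply: wf_mor_eq => //=; rewrite ?cats0 //.
- by apply: wf_tens => //; apply: wf_idm.
- by move=> b c bf cf; rewrite !take_oversize ?drop_oversize ?bf ?cf //= mulr1.
Qed.

Lemma tens_assoc f g h : tens (tens f g) h = tens f (tens g h).
Proof.
apply: mor_ext => /= [|//|b c]; rewrite ?catA //.
rewrite !size_cat !take_takel ?leq_addr // !take_drop !drop_drop -!mulrA.
by rewrite [(size (mcod g) + _)%N]addnC [(size (mdom g) + _)%N]addnC.
Qed.

Lemma tens_comp f f' g g' : mcod f = mdom g -> mcod f' = mdom g' ->
  tens (comp g f) (comp g' f') = comp (tens g g') (tens f f').
Proof.
move=> fg fg'; apply: mor_ext => //= b c.
rewrite size_cat big_allbits_cat mulr_suml; apply: eq_big_seq => m1 /size_allbits m1f.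
rewrite mulr_sumr; apply: eq_big_seq => m2 /size_allbits m2f'.
by rewrite -fg take_size_cat // drop_size_cat // mulrACA.
Qed.

Lemma dagger_idm N : dagger (idm N) = idm N.
Proof.
apply: mor_ext => //= b c; rewrite (eq_sym c b).
by case: eqP => [->|_]; [case: (_ == _)|]; rewrite /= ?conjC1 ?conjC0.
Qed.

Lemma daggerK f : dagger (dagger f) = f.
Proof. by apply: mor_ext => //= b c; rewrite conjCK. Qed.

Lemma dagger_comp f g : mcod f = mdom g -> dagger (comp g f) = comp (dagger f) (dagger g).
Proof.
move=> fg; apply: mor_ext => //= b c; rewrite -fg rmorph_sum.
by apply: eq_bigr => m _; rewrite rmorphM mulrC.
Qed.

Lemma dagger_tens f g : dagger (tens f g) = tens (dagger f) (dagger g).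
Proof. by apply: mor_ext => //= b c; rewrite rmorphM. Qed.

(** * Closure under the adjoint *)

Definition scale_mor e f := Mor (mdom f) (mcod f) (fun b c => e * mcoef f b c).

Lemma wf_scale e f : wf_mor f -> wf_mor (scale_mor e f).
Proof. by move=> wf_f b c off /=; rewrite wf_f ?mulr0. Qed.

Definition skew2 e i j : C :=
  if (i, j) == (0, 1)%N then e else if (i, j) == (1, 0)%N then - e else 0.

(* [sPf 0] on two labels is the vacuum [|{}>], on which [sPf^v (skew2 e)]
   evaluates to [Pf (skew2 e) = e]. *)
Definition scalar_mor e := comp (sPfv (skew2 e) [:: 0; 1]%N) (sPf (fun _ _ => 0) [:: 0; 1]%N).

Lemma inP_scalar e : inP (scalar_mor e).
Proof.
apply: inP_comp => //; [apply: inP_sPf | apply: inP_sPfv] => // i j.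
  by rewrite oppr0.
by rewrite !inE => /orP[] /eqP -> /orP[] /eqP ->; rewrite /skew2 /= ?opprK ?oppr0.
Qed.

Lemma tens_scalar e f : tens (scalar_mor e) f = scale_mor e f.
Proof.
apply: mor_ext => //= b c; rewrite !take0 !drop0 !big_cons big_nil /=.
by rewrite !Pf_cons /= !big_ord1 /drop_at /skew2 /Pf /= !big_ord0 expr0; ring.
Qed.

Lemma inP_scale e f : inP f -> inP (scale_mor e f).
Proof. by rewrite -tens_scalar; apply/inP_tens/inP_scalar. Qed.

Lemma dagger_sPf M N s : uniq N -> all (fun x => x < s)%N N ->
  dagger (sPf M N) =
  scale_mor (matching_sign (size N))
    (comp (sPfv (pairing s) (N ++ map (addn^~ s) N))
          (tens (idm N) (sPf (conj_shift M s) (map (addn^~ s) N)))).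
Proof.
move=> UN ltNs; set N' := map (addn^~ s) N.
have N'N : size N' = size N by rewrite size_map.
apply: wf_mor_eq => /=; first exact/wf_dagger/wf_sPf.
- by apply/wf_scale/wf_comp; [apply: wf_tens; [apply: wf_idm | apply: wf_sPf] | apply: wf_sPfv].
- by rewrite cats0.
- done.
move=> b c /size0nil -> cN; rewrite cN !eqxx /= size_cat big_allbits_cat N'N.
have tc : take (size N) c = c by rewrite -cN take_size.
have dc : drop (size N) c = [::] by rewrite -cN drop_size.
rewrite (eq_big_seq (fun m1 => if m1 == c then
    matching_sign (size (mask (map negb c) N)) * Pf (conj_shift M s) (mask c N') else 0)).
  rewrite big_allbits_delta cN eqxx /N' -map_mask Pf_conj_shift size_mask_negb //.
  rewrite -(Pf_rmorph Num.conj_op) !mulrA (mulrC (matching_sign (size N))).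
  by rewrite matching_sign_subn_Pf // size_mask // -cN count_size.
move=> m1 /size_allbits m1N.
rewrite (eq_big_seq (fun m2 => if m2 == m1 then if m1 == c then
    matching_sign (size (mask (map negb c) N)) * Pf (conj_shift M s) (mask c N') else 0 else 0)).
  by rewrite big_allbits_delta m1N eqxx.
move=> m2 /size_allbits m2N.
rewrite size_cat m1N m2N eqxx map_cat mask_cat ?size_map //.
rewrite take_size_cat // drop_size_cat // tc dc m1N !eqxx !andbT.
rewrite Pf_pairing_mask ?size_map // (inj_eq (inj_map negb_inj)) m2N eqxx.
case: eqP => [->|_]; last by rewrite mul0r.
by case: eqP => [->|_]; rewrite ?mul1r // mul0r mulr0.
Qed.

Lemma dagger_sPfv M N s : uniq N -> all (fun x => x < s)%N N ->
  dagger (sPfv M N) =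
  scale_mor (matching_sign (size N))
    (comp (tens (idm N) (sPfv (conj_shift M s) (map (addn^~ s) N)))
          (sPf (pairing s) (N ++ map (addn^~ s) N))).
Proof.
move=> UN ltNs; set N' := map (addn^~ s) N.
have N'N : size N' = size N by rewrite size_map.
apply: wf_mor_eq => /=; first exact/wf_dagger/wf_sPfv.
- by apply/wf_scale/wf_comp; [apply: wf_sPf | apply: wf_tens; [apply: wf_idm | apply: wf_sPfv]].
- done.
- by rewrite cats0.
move=> b c bN /size0nil ->; rewrite bN !eqxx /= size_cat big_allbits_cat N'N.
have tb : take (size N) b = b by rewrite -bN take_size.
have db : drop (size N) b = [::] by rewrite -bN drop_size.
have nbN : size (map negb b) = size N by rewrite size_map.
rewrite (eq_big_seq (fun m1 => if m1 == b then
    matching_sign (size (mask b N)) * Pf (conj_shift M s) (mask (map negb b) N') else 0)).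
  rewrite big_allbits_delta bN eqxx /N' -map_mask Pf_conj_shift.
  have -> : size (mask b N) = (size N - size (mask (map negb b) N))%N.
    by rewrite -size_mask_negb // (mapK negbK).
  rewrite -(Pf_rmorph Num.conj_op) !mulrA (mulrC (matching_sign (size N))).
  by rewrite matching_sign_subn_Pf // size_mask // -nbN count_size.
move=> m1 /size_allbits m1N.
rewrite (eq_big_seq (fun m2 => if m2 == m1 then if m1 == b then
    matching_sign (size (mask b N)) * Pf (conj_shift M s) (mask (map negb b) N') else 0 else 0)).
  by rewrite big_allbits_delta m1N eqxx.
move=> m2 /size_allbits m2N.
rewrite size_cat m1N m2N eqxx mask_cat //.
rewrite take_size_cat // drop_size_cat // tb db !eqxx !andbT.
rewrite Pf_pairing_mask // bN eqxx andbT /=.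
case: (m2 =P m1) => [->|_]; last by rewrite mulr0.
case: (eqVneq m1 b) => [->|_]; last by rewrite !mul0r.
by rewrite bN eqxx mul1r mulrC.
Qed.

Lemma all_ltn_sumnS N : all (fun x => x < (sumn N).+1)%N N.
Proof. by apply/allP; elim: N => //= y N IH x; rewrite inE => /orP[/eqP ->|/IH]; lia. Qed.

Lemma uniq_cat_shift N s : uniq N -> all (fun x => x < s)%N N ->
  uniq (N ++ map (addn^~ s) N).
Proof.
move=> UN /allP ltNs; rewrite cat_uniq UN (map_inj_uniq (@addIn s)) UN andbT /=.
by apply/hasPn => _ /mapP [x _ ->]; apply/negP => /ltNs; lia.
Qed.

Lemma inP_dagger_sPf M N : uniq N -> skew_on M N -> inP (dagger (sPf M N)).
Proof.
move=> UN skewM; have ltN := all_ltn_sumnS N.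
rewrite (dagger_sPf M UN ltN); apply: inP_scale; apply: inP_comp => //.
  apply: inP_tens; first exact: inP_id.
  apply: inP_sPf; last exact: conj_shift_skew.
  by rewrite (map_inj_uniq (@addIn _)).
by apply: inP_sPfv; [apply: uniq_cat_shift | apply: pairing_skew].
Qed.

Lemma inP_dagger_sPfv M N : uniq N -> skew_on M N -> inP (dagger (sPfv M N)).
Proof.
move=> UN skewM; have ltN := all_ltn_sumnS N.
rewrite (dagger_sPfv M UN ltN); apply: inP_scale; apply: inP_comp => //.
  by apply: inP_sPf; [apply: uniq_cat_shift | apply: pairing_skew].
apply: inP_tens; first exact: inP_id.
apply: inP_sPfv; last exact: conj_shift_skew.
by rewrite (map_inj_uniq (@addIn _)).
Qed.

Lemma inP_dagger f : inP f -> inP (dagger f).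
Proof.
elim=> {f} [M N|M N|N|g f _ IHf _ IHg fg|f g _ IHf _ IHg].
- exact: inP_dagger_sPf.
- exact: inP_dagger_sPfv.
- by rewrite dagger_idm; apply: inP_id.
- by rewrite dagger_comp //; apply: inP_comp.
- by rewrite dagger_tens; apply: inP_tens.
Qed.

End PfaffianCategory.

Theorem mainTheorem8 (R : realType) : strict_monoidal_dagger_cat (@inP R).
Proof.
have inP_wf_R := @inP_wf R.
split; first exact: inP_id.
split; first by move=> f g *; apply: inP_comp.
split; first by move=> f /inP_wf_R wf_f; split; [apply: comp_idl | apply: comp_idr].
split; first by move=> f g h *; apply: comp_assoc.
split; first by move=> f g *; apply: inP_tens.
split; first exact: tens_idm.
split; first by move=> f /inP_wf_R wf_f; split; [apply: tens_unitl | apply: tens_unitr].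
split; first by move=> f g h *; apply: tens_assoc.
split; first by move=> f f' g g' _ _ _ _; apply: tens_comp.
split; first exact: inP_dagger.
split; first exact: dagger_idm.
split; first by move=> f _; apply: daggerK.
split; first by move=> f g _ _; apply: dagger_comp.
by move=> f g _ _; apply: dagger_tens.
Qed.
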